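(* There exists a (non-linear) kernel $g$ of dimension $16$ whose partial distance sequence is $(D_{min}^{(0)},\dots,D_{min}^{(15)})=(1,2,2,2,2,4,4,4,6,6,6,8,8,8,8,16)$; consequently $E_{16}\ge E(g)=\frac1{16}\sum_{i=0}^{15}\log_{16}D_{min}^{(i)}\approx0.52742$.
   Context: A kernel of dimension $\ell$ is a bijection $g:\{0,1\}^\ell\to\{0,1\}^\ell$. ${\bf a}\bullet{\bf b}$ denotes concatenation, $d_H$ Hamming distance. Partial distances: $D_{min}^{(i)}=\min\{d_H(g({\bf w}\bullet 0\bullet{\bf u}),g({\bf w}\bullet 1\bullet {\bf v})) : {\bf w}\in\{0,1\}^i,\ {\bf u},{\bf v}\in\{0,1\}^{\ell-i-1}\}$, $i=0,\dots,\ell-1$; exponent $E(g)=\frac1\ell\sum_{i=0}^{\ell-1}\log_\ell D_{min}^{(i)}$; $E_\ell=\max_g E(g)$ over all kernels of dimension $\ell$. *)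

From Stdlib Require Import Reals.
From mathcomp Require Import all_boot.
(* ssreflect rebinds the %R key; give R_scope the key %Re. *)
Delimit Scope R_scope with Re.
Set Implicit Arguments. Unset Strict Implicit. Unset Printing Implicit Defensive.

Definition word (l : nat) := {ffun 'I_l -> bool}.

Definition kernel (l : nat) (g : word l -> word l) : Prop := bijective g.

Definition dH (l : nat) (x y : word l) : nat := #|[pred j : 'I_l | x j != y j]|.

(* x = w.0.u and y = w.1.v for some w of length i (i.e. x,y share the
   first i bits, x_i = 0, y_i = 1). *)
Definition split_pair (l : nat) (i : 'I_l) (x y : word l) : bool :=
  [forall j : 'I_l, (j < i)%N ==> (x j == y j)] && (x i == false) && (y i == true).

(* Partial distance D_min^(i).  The set of pairs is always nonempty, and all
   distances are <= l, so using l as the neutral element of minn is harmless. *)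
Definition Dmin (l : nat) (g : word l -> word l) (i : 'I_l) : nat :=
  \big[minn/l]_(x : word l) \big[minn/l]_(y : word l | split_pair i x y) dH (g x) (g y).

Definition exponent (l : nat) (g : word l -> word l) : R :=
  (/ INR l * \big[Rplus/0%Re]_(i < l) (ln (INR (Dmin g i)) / ln (INR l)))%Re.

(* E_l = max over all kernels of dimension l (finite max; exponents of
   kernels are >= 0, so 0 is a harmless neutral element). *)
Definition E_max (l : nat) : R :=
  \big[Rmax/0%Re]_(g : {ffun word l -> word l} | injectiveb g) exponent g.

(* The kernel is "linear plus coset shift": it maps x to x G + c(x_8, x_9, x_10),
   where rows 8, 9, 10 of the 16 x 16 matrix G vanish and c selects one of eight
   coset leaders.  Hence g(x) + g(y) only depends on the difference d = x + y and
   on the three coset bits of x, and D_min^(i) is the least weight of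
   d G + c(t) + c(t + d_{8..10}) over the d whose first nonzero bit is at i and the
   eight choices of t; this table of 2^19 weights is checked by computation, and
   the unit vectors e_i (paired with 0) attain the minima.  All partial distances
   being positive, g is injective.  The exponent is
   (29 ln 2 + 3 ln 3) / (64 ln 2) = 29/64 + (3/64) log_2 3, and
   84/53 < log_2 3 < 149/94 because 2^84 < 3^53 and 3^94 < 2^149. *)

From Stdlib Require Import Reals Lra.
From mathcomp Require Import all_boot.
Set Implicit Arguments. Unset Strict Implicit. Unset Printing Implicit Defensive.

Lemma dH_xx l (x : word l) : dH x x = 0.
Proof. by apply: eq_card0 => j; rewrite !inE eqxx. Qed.

Lemma bigminn_le (T : eqType) (r : seq T) (P : pred T) (F : T -> nat) m x0 :
  x0 \in r -> P x0 -> \big[minn/m]_(x <- r | P x) F x <= F x0.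
Proof.
move=> + Px0; elim: r => // x r IHr; rewrite inE big_cons => /orP[/eqP <- | /IHr le_r].
  by rewrite Px0 geq_minl.
by case: ifP => _ //; rewrite geq_min le_r orbT.
Qed.

Lemma split_pair_unit l (i : 'I_l) : split_pair i [ffun=> false] [ffun j => j == i].
Proof.
rewrite /split_pair !ffunE !eqxx !andbT; apply/forallP => j.
by apply/implyP => lt_ji; rewrite !ffunE eq_sym eqbF_neg neq_ltn lt_ji.
Qed.

Lemma split_pair_first l (x y : word l) (i : 'I_l) :
  x i != y i -> (forall j : 'I_l, j < i -> x j = y j) ->
  split_pair i x y || split_pair i y x.
Proof.
move=> xy_i first_i.
have agree u v : (u = x /\ v = y) \/ (u = y /\ v = x) ->
    [forall j : 'I_l, (j < i) ==> (u j == v j)].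
  by case=> -[-> ->]; apply/forallP => j; apply/implyP => /first_i ->.
rewrite /split_pair !agree; [|by right|by left].
by move: xy_i; case: (x i); case: (y i).
Qed.

Lemma bigRmax_ge (T : eqType) (r : seq T) (P : pred T) (F : T -> R) m x0 :
  x0 \in r -> P x0 -> (F x0 <= \big[Rmax/m]_(x <- r | P x) F x)%Re.
Proof.
move=> + Px0; elim: r => // x r IHr; rewrite inE big_cons => /orP[/eqP <- | /IHr le_r].
  by rewrite Px0; apply: Rmax_l.
by case: ifP => _ //; apply: Rle_trans le_r (Rmax_r _ _).
Qed.

Section PartialDistances.
Variables (l : nat) (g : word l -> word l).

Lemma Dmin_le_dH i x y : split_pair i x y -> Dmin g i <= dH (g x) (g y).
Proof.
move=> xy_i; pose Dx x' := \big[minn/l]_(y' | split_pair i x' y') dH (g x') (g y').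
apply: leq_trans (@bigminn_le _ _ xpredT Dx l x (mem_index_enum x) isT) _.
exact: bigminn_le (mem_index_enum y) xy_i.
Qed.

Lemma Dmin_ge i b : b <= l ->
  (forall x y, split_pair i x y -> b <= dH (g x) (g y)) -> b <= Dmin g i.
Proof.
move=> le_bl lb_dH; apply: (big_ind (leq b)) => // [m n|x _].
  by rewrite leq_min => -> ->.
by apply: (big_ind (leq b)) => // [m n|y]; [rewrite leq_min => -> -> | exact: lb_dH].
Qed.

Lemma Dmin_gt0_inj : (forall i, 0 < Dmin g i) -> injective g.
Proof.
move=> Dmin_gt0 x y gxy; apply/ffunP => k; apply/eqP; apply: contraT => xy_k.
pose i := [arg min_(j < k | x j != y j) j].
have [xy_i first_i] : x i != y i /\ forall j : 'I_l, j < i -> x j = y j.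
  rewrite /i; case: arg_minnP => // j xy_j min_j; split=> // j' lt_j'j.
  by apply/eqP; apply: contraTT lt_j'j => /min_j; rewrite -leqNgt.
have /orP[] := split_pair_first xy_i first_i => /Dmin_le_dH;
  by rewrite gxy dH_xx leqn0 => /eqP Dmin0; move: (Dmin_gt0 i); rewrite Dmin0.
Qed.

Lemma exponentE : exponent g = (/ INR l *
  \big[Rplus/0%Re]_(d <- map INR [seq Dmin g i | i <- enum 'I_l]) (ln d / ln (INR l)))%Re.
Proof. by rewrite /exponent -map_comp big_map enumT [index_enum _]unlock. Qed.

Lemma exponent_le_E_max : injective g -> (exponent g <= E_max l)%Re.
Proof.
move=> g_inj; have -> : exponent g = exponent (finfun g).
  rewrite /exponent; congr (_ * _)%Re; apply: eq_bigr => i _; rewrite /Dmin; do 3!f_equal.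
  by apply: eq_bigr => x _; apply: eq_bigr => y _; rewrite !ffunE.
apply: bigRmax_ge (mem_index_enum _) _.
by apply/injectiveP => x y; rewrite !ffunE => /g_inj.
Qed.
End PartialDistances.

Definition xorv (a b : seq bool) : seq bool := [seq p.1 (+) p.2 | p <- zip a b].

Definition wt (s : seq bool) : nat := count id s.

Lemma size_xorv a b : size (xorv a b) = minn (size a) (size b).
Proof. by rewrite size_map size_zip. Qed.

Lemma nth_xorv a b k : size a = size b ->
  nth false (xorv a b) k = nth false a k (+) nth false b k.
Proof.
move=> eq_ab; have [lt_ka | le_ak] := ltnP k (size a).
  by rewrite (nth_map (false, false)) ?nth_zip // size_zip -eq_ab minnn.
by rewrite !nth_default // ?size_xorv -?eq_ab ?minnn.
Qed.

Lemma card_nth_wt n (s : seq bool) : size s = n -> #|[pred k : 'I_n | nth false s k]| = wt s.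
Proof.
move=> <-; rewrite cardE /enum_mem size_filter -enumT /wt.
rewrite -[in RHS](mkseq_nth false s) /mkseq -val_enum_ord -map_comp count_map.
exact: eq_count.
Qed.

Fixpoint lincomb (n : nat) (s : seq bool) (rows : seq (seq bool)) : seq bool :=
  match s, rows with
  | b :: s', r :: rows' => if b then xorv r (lincomb n s' rows') else lincomb n s' rows'
  | _, _ => nseq n false
  end.

Lemma size_lincomb n rows s :
  all (fun r => size r == n) rows -> size (lincomb n s rows) = n.
Proof.
elim: rows s => [[|[] ?]|r rs IHrs [|[] s] /andP[/eqP size_r /IHrs size_rs]];
  rewrite /= ?size_nseq //.
by rewrite size_xorv size_r size_rs minnn.
Qed.

Lemma nth_lincomb_xor n rows a b k :
  all (fun r => size r == n) rows -> size a = size b ->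
  nth false (lincomb n (xorv a b) rows) k =
  nth false (lincomb n a rows) k (+) nth false (lincomb n b rows) k.
Proof.
elim: rows a b => [|r rs IHrs] [|x a] [|y b] //=; rewrite ?nth_nseq ?if_same //.
case/andP=> /eqP size_r size_rs [eq_ab]; rewrite -/(xorv a b).
have size_l s : size (lincomb n s rs) = size r by rewrite size_r size_lincomb.
case: x; case: y; rewrite /= ?nth_xorv ?size_l ?IHrs //;
  by case: (nth false r k); case: (nth false (lincomb n a rs) k);
     case: (nth false (lincomb n b rs) k).
Qed.

Definition bits l (x : word l) : seq bool := [seq x j | j <- enum 'I_l].

Lemma size_bits l (x : word l) : size (bits x) = l.
Proof. by rewrite size_map size_enum_ord. Qed.

Lemma nth_bits l (x : word l) (k : 'I_l) : nth false (bits x) k = x k.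
Proof. by rewrite (nth_map k) ?size_enum_ord ?nth_ord_enum. Qed.

Lemma bits_const0 l : bits [ffun _ : 'I_l => false] = nseq l false.
Proof.
apply: (@eq_from_nth _ false) => [|k]; rewrite size_bits ?size_nseq // => lt_kl.
by rewrite -[k]/(val (Ordinal lt_kl)) nth_bits ffunE nth_nseq lt_kl.
Qed.

Lemma bits_unit l (i : 'I_l) : bits [ffun j => j == i] = mkseq (eq_op^~ (val i)) l.
Proof.
apply: (@eq_from_nth _ false) => [|k]; rewrite size_bits ?size_mkseq // => lt_kl.
by rewrite -[k]/(val (Ordinal lt_kl)) nth_bits ffunE nth_mkseq.
Qed.

Lemma find_split_pair l (i : 'I_l) x y :
  split_pair i x y -> find id (xorv (bits x) (bits y)) = i.
Proof.
case/andP=> /andP[/forallP agree /eqP xi] /eqP yi; set d := xorv _ _.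
have nth_d (k : 'I_l) : nth false d k = x k (+) y k.
  by rewrite nth_xorv ?size_bits // !nth_bits.
have d_i : nth false d i by rewrite nth_d xi yi.
have [lt_fi|lt_if|//] := ltngtP (find id d) i; last by rewrite (before_find false lt_if) in d_i.
have has_d : has id d.
  by apply/(has_nthP false); exists (val i); rewrite // /d size_xorv !size_bits minnn ltn_ord.
have lt_fl := ltn_trans lt_fi (ltn_ord i).
have := nth_find false has_d; rewrite -[find _ _]/(val (Ordinal lt_fl)) nth_d.
by have /implyP/(_ lt_fi)/eqP -> := agree (Ordinal lt_fl); rewrite addbb.
Qed.

Definition gen16 : seq (seq bool) := map (map (eq_op 1))
  [:: [:: 0; 0; 0; 0; 0; 0; 0; 0; 0; 0; 0; 0; 0; 0; 0; 1];
     [:: 0; 0; 0; 0; 0; 0; 0; 0; 0; 0; 0; 0; 0; 0; 1; 1];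
     [:: 0; 0; 0; 0; 0; 0; 0; 0; 0; 0; 0; 0; 0; 1; 0; 1];
     [:: 0; 0; 0; 0; 0; 0; 0; 0; 0; 0; 0; 1; 0; 0; 0; 1];
     [:: 0; 0; 0; 0; 0; 0; 0; 1; 0; 0; 0; 0; 0; 0; 0; 1];
     [:: 0; 0; 0; 1; 0; 0; 0; 1; 0; 0; 0; 1; 0; 0; 0; 1];
     [:: 0; 0; 0; 0; 0; 1; 0; 1; 0; 0; 0; 0; 0; 1; 0; 1];
     [:: 0; 0; 0; 0; 0; 0; 0; 0; 0; 1; 0; 1; 0; 1; 0; 1];
     [:: 0; 0; 0; 0; 0; 0; 0; 0; 0; 0; 0; 0; 0; 0; 0; 0];
     [:: 0; 0; 0; 0; 0; 0; 0; 0; 0; 0; 0; 0; 0; 0; 0; 0];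
     [:: 0; 0; 0; 0; 0; 0; 0; 0; 0; 0; 0; 0; 0; 0; 0; 0];
     [:: 0; 1; 0; 1; 0; 1; 0; 1; 0; 1; 0; 1; 0; 1; 0; 1];
     [:: 0; 0; 1; 1; 0; 0; 1; 1; 0; 0; 1; 1; 0; 0; 1; 1];
     [:: 0; 0; 0; 0; 1; 1; 1; 1; 0; 0; 0; 0; 1; 1; 1; 1];
     [:: 0; 0; 0; 0; 0; 0; 0; 0; 1; 1; 1; 1; 1; 1; 1; 1];
     [:: 1; 1; 1; 1; 1; 1; 1; 1; 1; 1; 1; 1; 1; 1; 1; 1]].

Definition leaders16 : seq (seq bool) := map (map (eq_op 1))
  [:: [:: 0; 0; 0; 0; 0; 0; 0; 0; 0; 0; 0; 0; 0; 0; 0; 0];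
     [:: 0; 0; 0; 0; 0; 0; 1; 1; 0; 1; 0; 1; 0; 1; 1; 0];
     [:: 0; 0; 0; 0; 0; 1; 0; 1; 0; 1; 1; 0; 0; 0; 1; 1];
     [:: 0; 0; 0; 1; 0; 1; 1; 1; 0; 0; 1; 0; 0; 1; 0; 0];
     [:: 0; 0; 0; 1; 0; 1; 0; 0; 0; 1; 0; 0; 1; 1; 1; 0];
     [:: 0; 0; 0; 1; 0; 0; 1; 0; 0; 0; 0; 1; 1; 1; 0; 1];
     [:: 0; 0; 0; 1; 0; 0; 0; 1; 0; 1; 1; 1; 1; 0; 0; 0];
     [:: 0; 0; 0; 0; 0; 1; 1; 0; 0; 0; 1; 1; 1; 0; 1; 0]].

Definition coset_bits (s : seq bool) : seq bool :=
  [:: nth false s 8; nth false s 9; nth false s 10].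

Definition leader (t : seq bool) : seq bool :=
  nth (nseq 16 false) leaders16 (foldr (fun (b : bool) m => b + m.*2) 0 t).

Definition encode16 (s : seq bool) : seq bool :=
  xorv (lincomb 16 s gen16) (leader (coset_bits s)).

Definition g16 (x : word 16) : word 16 := [ffun k : 'I_16 => nth false (encode16 (bits x)) k].

(* The weight of g(x) + g(x + d) when t are the coset bits of x. *)
Definition pair_dist (d t : seq bool) : nat :=
  wt (xorv (lincomb 16 d gen16) (xorv (leader t) (leader (xorv t (coset_bits d))))).

Lemma size_gen16 : all (fun r => size r == 16) gen16. Proof. by []. Qed.

Lemma size_leader t : size (leader t) = 16.
Proof.
rewrite /leader; set j := foldr _ _ _.
have [lt_j | le_j] := ltnP j (size leaders16); last by rewrite nth_default.
have size_leaders : all (fun r => size r == 16) leaders16 by [].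
by have /allP/(_ _ (mem_nth _ lt_j))/eqP := size_leaders.
Qed.

Lemma dH_g16 x y :
  dH (g16 x) (g16 y) = pair_dist (xorv (bits x) (bits y)) (coset_bits (bits x)).
Proof.
have coset_y :
    xorv (coset_bits (bits x)) (coset_bits (xorv (bits x) (bits y))) = coset_bits (bits y).
  by rewrite /coset_bits !nth_xorv ?size_bits // /xorv /= !addKb.
rewrite /pair_dist coset_y /dH -(card_nth_wt (n := 16)); last first.
  by rewrite !size_xorv size_lincomb ?size_gen16 // !size_leader.
apply: eq_card => k; rewrite !inE !ffunE /encode16 negb_eqb.
rewrite !nth_xorv ?size_lincomb ?size_leader ?size_xorv ?size_bits ?size_gen16
  ?size_leader ?minnn //.
by rewrite nth_lincomb_xor ?size_gen16 ?size_bits // addbACA.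
Qed.

Definition pd16 : seq nat := [:: 1; 2; 2; 2; 2; 4; 4; 4; 6; 6; 6; 8; 8; 8; 8; 16].

Fixpoint allseqs (n : nat) : seq (seq bool) :=
  if n is n'.+1 then [seq b :: s | b <- [:: false; true], s <- allseqs n'] else [:: [::]].

Lemma mem_allseqs n s : size s = n -> s \in allseqs n.
Proof.
elim: n s => [|n IHn] [|b s] // [/IHn s_n].
by apply/allpairsP; exists (b, s); rewrite /= s_n; case: b.
Qed.

(* For d = 0 the bound is the junk value nth 0 pd16 16 = 0. *)
Lemma pair_dist_lower_table :
  all (fun d => all (fun t => nth 0 pd16 (find id d) <= pair_dist d t) (allseqs 3)) (allseqs 16).
Proof. by vm_compute. Qed.

Lemma pair_dist_unit_table :
  all (fun i => pair_dist (xorv (nseq 16 false) (mkseq (eq_op^~ i) 16)) (coset_bits (nseq 16 false))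
                <= nth 0 pd16 i) (iota 0 16).
Proof. by vm_compute. Qed.

Lemma pd16_le16 j : nth 0 pd16 j <= 16.
Proof. by do 16!case: j => [//|j]; rewrite nth_default. Qed.

Lemma Dmin_g16 (i : 'I_16) : Dmin g16 i = nth 0 pd16 i.
Proof.
apply/eqP; rewrite eqn_leq; apply/andP; split.
  have /allP/(_ i) := pair_dist_unit_table; rewrite mem_iota ltn_ord => /(_ isT).
  apply: leq_trans; have := Dmin_le_dH g16 (split_pair_unit i).
  by rewrite dH_g16 bits_const0 bits_unit.
apply: Dmin_ge (pd16_le16 i) _ => x y /find_split_pair <-; rewrite dH_g16.
have size_d : size (xorv (bits x) (bits y)) = 16 by rewrite size_xorv !size_bits.
have /allP/(_ _ (mem_allseqs size_d))/allP := pair_dist_lower_table.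
by apply; apply: mem_allseqs.
Qed.

Lemma pd16_gt0 j : j < 16 -> 0 < nth 0 pd16 j.
Proof. by do 16!case: j => [//|j]. Qed.

Lemma g16_inj : injective g16.
Proof. by apply: Dmin_gt0_inj => i; rewrite Dmin_g16 pd16_gt0. Qed.

Lemma Dmin_seq_g16 : [seq Dmin g16 i | i <- enum 'I_16] = pd16.
Proof. by rewrite (eq_map Dmin_g16) (map_comp (nth 0 pd16) val) val_enum_ord. Qed.

Section ExponentValue.
Local Open Scope R_scope.

Lemma ln_pow_lt a b m n : 0 < a -> 0 < b -> a ^ m < b ^ n -> INR m * ln a < INR n * ln b.
Proof.
move=> a_gt0 b_gt0 lt_ab; rewrite -!ln_pow //.
exact: ln_increasing (pow_lt _ _ a_gt0) lt_ab.
Qed.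

Lemma ln_INR_mul m n : (0 < m)%N -> (0 < n)%N -> ln (INR (m * n)) = ln (INR m) + ln (INR n).
Proof. by move=> /ltP m_gt0 /ltP n_gt0; rewrite mult_INR ln_mult //; apply: lt_0_INR. Qed.

Lemma ln3_ln2_bounds : 84 * ln 2 < 53 * ln 3 /\ 94 * ln 3 < 149 * ln 2.
Proof.
split; [have := @ln_pow_lt 2 3 84 53 | have := @ln_pow_lt 3 2 94 149];
  rewrite !INR_IZR_INZ; apply; lra.
Qed.

Lemma ln2_gt0 : 0 < ln 2.
Proof. by rewrite -ln_1; apply: ln_increasing; lra. Qed.

Lemma sum_ln_pd16 :
  \big[Rplus/0]_(d <- map INR pd16) (ln d / ln 16) = (29 * ln 2 + 3 * ln 3) / (4 * ln 2).
Proof.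
have INR2 : INR 2 = 2 by rewrite INR_IZR_INZ.
have INR3 : INR 3 = 3 by rewrite INR_IZR_INZ.
have ln1 : ln (INR 1) = 0 by rewrite /= ln_1.
have ln4 : ln (INR 4) = 2 * ln 2 by rewrite (@ln_INR_mul 2 2) // INR2; lra.
have ln6 : ln (INR 6) = ln 2 + ln 3 by rewrite (@ln_INR_mul 2 3) // INR2 INR3.
have ln8 : ln (INR 8) = 3 * ln 2 by rewrite (@ln_INR_mul 2 4) // ln4 INR2; lra.
have ln16 : ln (INR 16) = 4 * ln 2 by rewrite (@ln_INR_mul 2 8) // ln8 INR2; lra.
have lnR16 : ln 16 = 4 * ln 2 by rewrite -ln16 INR_IZR_INZ.
rewrite /pd16 !big_cons big_nil ln1 INR2 ln4 ln6 ln8 ln16 lnR16.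
by field; have := ln2_gt0; lra.
Qed.

Lemma exponent_bounds : 0.52741 < / 16 * ((29 * ln 2 + 3 * ln 3) / (4 * ln 2)) < 0.52743.
Proof.
have ln2_pos := ln2_gt0; have [lo hi] := ln3_ln2_bounds.
set E := / 16 * _.
have E_ln2 : E * (64 * ln 2) = 29 * ln 2 + 3 * ln 3 by rewrite /E; field; lra.
split; nra.
Qed.

End ExponentValue.

Theorem mainTheorem11 :
  exists g : word 16 -> word 16,
    kernel g /\
    [seq Dmin g i | i <- enum 'I_16] = [:: 1; 2; 2; 2; 2; 4; 4; 4; 6; 6; 6; 8; 8; 8; 8; 16]%N /\
    (E_max 16 >= exponent g)%Re /\
    exponent g = (/ 16 * \big[Rplus/0%Re]_(d <- map INR [:: 1; 2; 2; 2; 2; 4; 4; 4; 6; 6; 6; 8; 8; 8; 8; 16]%N)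
                    (ln d / ln 16))%Re /\
    (0.52741 < exponent g < 0.52743)%Re.
Proof.
have exponent_g16 : exponent g16 = (/ 16 * \big[Rplus/0%Re]_(d <- map INR pd16) (ln d / ln 16))%Re.
  by rewrite exponentE Dmin_seq_g16 INR_IZR_INZ.
exists g16; split; first exact: injF_bij g16_inj.
split; first exact: Dmin_seq_g16.
split; first exact/Rle_ge/exponent_le_E_max/g16_inj.
split; first exact: exponent_g16.
by rewrite exponent_g16 sum_ln_pd16; apply: exponent_bounds.
Qed.
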